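(* Let $a,b\in\mathbb{R}$ satisfy $\frac13<a-b<\frac4{\pi^2}$ and $\frac2\pi-b<a\le\frac12$. Suppose moreover that $16ab(b-a)+(a+b)^2>0$ and that \[ x_1=\frac{(a+b)(2b-2a+1)-\sqrt{16ab(b-a)+(a+b)^2}}{2(a-b)^2}>0 . \] Then for all $x\in(0,1)$, \[ L(x)\le \arccos x\le \frac{(1+x_1)^{b+1/2}(1-x_1)^{1/2-a}}{a+b+(a-b)x_1}\cdot\frac{(1-x)^a}{(1+x)^b}, \] where $L(x)=\min\{2^{b+1/2},\frac{\pi}{2}\}\dfrac{(1-x)^a}{(1+x)^b}$ if $a=\frac12$, and $L(x)=0$ if $a<\frac12$.
   Context: $\arccos$ denotes the principal inverse cosine with values in $[0,\pi]$. *)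

From Stdlib Require Import Reals.
Open Scope R_scope.

Definition Lbound (a b x : R) : R :=
  if Req_EM_T a (1/2)
  then Rmin (Rpower 2 (b + 1/2)) (PI/2) * (Rpower (1 - x) a / Rpower (1 + x) b)
  else 0.

Definition x1_of (a b : R) : R :=
  ((a + b) * (2*b - 2*a + 1) - sqrt (16*a*b*(b - a) + (a + b)^2)) / (2 * (a - b)^2).

From Stdlib Require Import Reals Lra Psatz.
From Coquelicot Require Import Coquelicot.
Open Scope R_scope.

(** Put θ = arccos x ∈ (0, π/2), so x = cos θ, and take logarithms.  With
      Φ(t) = ln t + b ln(1 + cos t) - a ln(1 - cos t),
      ψ(x) = (b + ½) ln(1 + x) + (½ - a) ln(1 - x) - ln(a + b + (a - b) x),
    the upper bound reads Φ(θ) <= ψ(x₁), and the lower bound for a = ½ reads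
    Φ(θ) >= min((b + ½) ln 2, ln(π/2)).  Everything is governed by
      g(t) = sin t - t (a + b + (a - b) cos t):
    Φ' = g / (t sin t), and Φ(t) <= ψ(cos t) exactly when g(t) >= 0.  Three
    differentiations show that g is positive near 0 and that, on (0, π/2), once
    negative it stays negative (since t cot t decreases). *)

Lemma mvt (f f' : R -> R) (s t : R) : s < t ->
  (forall c, s <= c <= t -> is_derive f c (f' c)) ->
  exists c, s < c < t /\ f t - f s = f' c * (t - s).
Proof.
  intros Hst Hd.
  destruct (MVT_cor2 f f' s t Hst) as [c [Heq Hc]].
  - intros c Hc; apply is_derive_Reals, Hd, Hc.
  - exists c; split; assumption.
Qed.

Lemma larger_on_left (f : R -> R) (c l lo : R) :
  is_derive f c l -> l < 0 -> lo < c -> exists y, lo < y < c /\ f c < f y.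
Proof.
  intros Hd Hl Hlo. apply is_derive_Reals in Hd.
  destruct (Hd (- l / 2)) as [d Hnear]; [lra|].
  pose proof (cond_pos d) as Hd0.
  set (h := - Rmin (d / 2) ((c - lo) / 2)).
  assert (Hh : h < 0 /\ - h <= d / 2 /\ - h <= (c - lo) / 2).
  { unfold h. pose proof (Rmin_l (d / 2) ((c - lo) / 2)).
    pose proof (Rmin_r (d / 2) ((c - lo) / 2)).
    pose proof (Rmin_pos (d / 2) ((c - lo) / 2) ltac:(lra) ltac:(lra)). lra. }
  assert (Habs : Rabs h < d) by (rewrite Rabs_left; lra).
  specialize (Hnear h ltac:(lra) Habs). apply Rabs_def2 in Hnear.
  set (q := (f (c + h) - f c) / h) in Hnear.
  assert (Hq : f (c + h) - f c = q * h) by (unfold q; field; lra).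
  exists (c + h). split; [lra | nra].
Qed.

Lemma le_of_right_bound (h : R -> R) (x0 d C : R) : continuity_pt h x0 -> 0 < d ->
  (forall e, x0 < e < x0 + d -> h e <= C) -> h x0 <= C.
Proof.
  intros Hc Hd Hb. destruct (Rle_or_lt (h x0) C) as [|Hgt]; [assumption|exfalso].
  destruct (Hc (h x0 - C)) as [al [Hal Hnear]]; [lra|].
  set (e := x0 + Rmin (al / 2) (d / 2)).
  assert (He : x0 < e /\ e - x0 <= al / 2 /\ e - x0 <= d / 2).
  { unfold e. pose proof (Rmin_l (al / 2) (d / 2)). pose proof (Rmin_r (al / 2) (d / 2)).
    pose proof (Rmin_pos (al / 2) (d / 2) ltac:(lra) ltac:(lra)). lra. }
  specialize (Hnear e). simpl in Hnear. unfold R_dist, D_x, no_cond in Hnear.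
  assert (Hclose : Rabs (h e - h x0) < h x0 - C).
  { apply Hnear. split; [split; [exact I | lra] | rewrite Rabs_right; lra]. }
  apply Rabs_def2 in Hclose. specialize (Hb e ltac:(lra)). lra.
Qed.

Lemma nondecreasing_of_deriv (f f' : R -> R) (s t : R) : s <= t ->
  (forall c, s <= c <= t -> is_derive f c (f' c)) ->
  (forall c, s < c < t -> 0 <= f' c) -> f s <= f t.
Proof.
  intros Hst Hd Hpos. destruct (Rle_lt_or_eq_dec s t Hst) as [Hlt|<-]; [|lra].
  destruct (mvt f f' s t Hlt Hd) as [c [Hc Heq]].
  specialize (Hpos c Hc). nra.
Qed.

Lemma nonincreasing_of_deriv (f f' : R -> R) (s t : R) : s <= t ->
  (forall c, s <= c <= t -> is_derive f c (f' c)) ->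
  (forall c, s < c < t -> f' c <= 0) -> f t <= f s.
Proof.
  intros Hst Hd Hneg. destruct (Rle_lt_or_eq_dec s t Hst) as [Hlt|<-]; [|lra].
  destruct (mvt f f' s t Hlt Hd) as [c [Hc Heq]].
  specialize (Hneg c Hc). nra.
Qed.

Lemma positive_after_zero (f f' : R -> R) (d : R) :
  (forall t, 0 <= t <= d -> is_derive f t (f' t)) -> 0 <= f 0 ->
  (forall t, 0 < t <= d -> 0 < f' t) -> forall t, 0 < t <= d -> 0 < f t.
Proof.
  intros Hd H0 Hpos t Ht.
  destruct (mvt f f' 0 t) as [c [Hc Heq]]; [lra | intros; apply Hd; lra |].
  specialize (Hpos c ltac:(lra)). nra.
Qed.

(** Otherwise [f'] would be negative
    somewhere in (0, s) (as [f] decreased from [f 0]) but positive somewhere in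
    (s, t) (as [f] rose again). *)
Lemma negative_persists (f f' : R -> R) (T : R) :
  (forall t, 0 <= t < T -> is_derive f t (f' t)) -> 0 <= f 0 ->
  (forall s t, 0 < s < t -> t < T -> f' s < 0 -> f' t < 0) ->
  forall s t, 0 < s < t -> t < T -> f s < 0 -> f t < 0.
Proof.
  intros Hd H0 Hpers s t Hst HtT Hs.
  destruct (Rlt_or_le (f t) 0) as [|Ht]; [assumption | exfalso].
  destruct (mvt f f' 0 s) as [c0 [Hc0 E0]]; [lra | intros; apply Hd; lra |].
  destruct (mvt f f' s t) as [c [Hc E]]; [lra | intros; apply Hd; lra |].
  assert (Hc0neg : f' c0 < 0) by nra.
  assert (Hcneg : f' c < 0) by (apply (Hpers c0 c); lra).
  nra.
Qed.

Lemma ln_le_iff (u v : R) : 0 < u -> 0 < v -> (ln u <= ln v <-> u <= v).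
Proof.
  intros Hu Hv. split; intros H.
  - destruct (Rle_or_lt u v) as [|Hlt]; [assumption|].
    pose proof (ln_increasing v u Hv Hlt). lra.
  - apply ln_le; assumption.
Qed.

Lemma cos_ge_quadratic t : -PI/2 <= t <= PI/2 -> 1 - t^2/2 <= cos t.
Proof.
  intros Ht. destruct (cos_bound t 0) as [Hlow _]; [lra | lra |].
  replace (1 - t^2/2) with (cos_approx t (2*0+1)); [assumption|].
  unfold cos_approx, cos_term. simpl. field.
Qed.

Lemma cos_between_0_1 t : 0 < t < PI/2 -> 0 < cos t < 1.
Proof.
  intros Ht. pose proof PI_RGT_0.
  pose proof (sin_gt_0 t ltac:(lra) ltac:(lra)). pose proof (sin2_cos2 t).
  pose proof (cos_gt_0 t ltac:(lra) ltac:(lra)). unfold Rsqr in *. split; nra.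
Qed.

(** [t cot t] is strictly decreasing on (0, π/2), written without division:
    its derivative is [(sin t cos t - t) / sin² t < 0] since [sin 2t < 2t]. *)
Lemma tcot_decreasing s t : 0 < s < t -> t < PI/2 ->
  t * cos t * sin s < s * cos s * sin t.
Proof.
  intros Hst Ht. pose proof PI_RGT_0.
  assert (Hsin : forall u, 0 < u <= t -> 0 < sin u) by (intros; apply sin_gt_0; lra).
  destruct (mvt (fun u => u * cos u / sin u) (fun u => (sin u * cos u - u) / (sin u)^2) s t)
    as [c [Hc Heq]]; [lra | |].
  - intros c Hc. pose proof (Hsin c ltac:(lra)). auto_derive; [lra|].
    pose proof (sin2_cos2 c). unfold Rsqr in *. field_simplify_eq; [nra | lra].
  - pose proof (Hsin c ltac:(lra)). pose proof (Hsin s ltac:(lra)). pose proof (Hsin t ltac:(lra)).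
    assert (Hdouble : sin c * cos c < c) by (pose proof (sin_lt_x (2*c) ltac:(lra)); rewrite sin_2a in *; lra).
    assert (Hslope : (sin c * cos c - c) / (sin c)^2 < 0) by (apply Rdiv_neg_pos; nra).
    assert (Hdec : t * cos t / sin t < s * cos s / sin s) by nra.
    apply (Rmult_lt_compat_r (sin s * sin t)) in Hdec; [|nra].
    field_simplify in Hdec; lra.
Qed.

Definition g (a b t : R) : R := sin t - t * (a + b + (a - b) * cos t).
Definition dg (a b t : R) : R := cos t - (a + b) - (a - b) * (cos t - t * sin t).
Definition ddg (a b t : R) : R := (a - b) * t * cos t - (1 - 2 * (a - b)) * sin t.

Lemma g_deriv a b t : is_derive (g a b) t (dg a b t).
Proof. unfold g, dg. auto_derive; [exact I | ring]. Qed.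

Lemma dg_deriv a b t : is_derive (dg a b) t (ddg a b t).
Proof. unfold dg, ddg. auto_derive; [exact I | ring]. Qed.

(** Sign pattern of [g] on (0, π/2), for [k = a - b]: positive near 0 when
    [1/3 < k < 1/2], and once negative it stays negative.  Both facts are
    obtained for [ddg = k t cos t - (1-2k) sin t] and lifted through
    [dg 0 = 1 - 2a >= 0] and [g 0 = 0]. *)
Section SignOfG.
Variables a b : R.

(** [ddg t < 0] means [k t cot t < 1 - 2k], which persists as [t cot t] decreases. *)
Lemma ddg_negative_persists : 0 < a - b ->
  forall s t, 0 < s < t -> t < PI/2 -> ddg a b s < 0 -> ddg a b t < 0.
Proof.
  intros Hk s t Hst Ht Hs. unfold ddg in *. pose proof PI_RGT_0.
  pose proof (tcot_decreasing s t Hst Ht) as Hcot.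
  pose proof (sin_gt_0 s ltac:(lra) ltac:(lra)). pose proof (sin_gt_0 t ltac:(lra) ltac:(lra)).
  set (k := a - b) in *.
  assert (Hchain : k * t * cos t * sin s < (1 - 2 * k) * sin t * sin s) by nra.
  apply Rmult_lt_reg_r in Hchain; lra.
Qed.

Lemma dg_negative_persists : 0 < a - b -> 2 * a <= 1 ->
  forall s t, 0 < s < t -> t < PI/2 -> dg a b s < 0 -> dg a b t < 0.
Proof.
  intros Hk Ha. apply (negative_persists (dg a b) (ddg a b)).
  - intros; apply dg_deriv.
  - unfold dg. rewrite cos_0, sin_0. lra.
  - exact (ddg_negative_persists Hk).
Qed.

Lemma g_negative_persists : 0 < a - b -> 2 * a <= 1 ->
  forall s t, 0 < s < t -> t < PI/2 -> g a b s < 0 -> g a b t < 0.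
Proof.
  intros Hk Ha. apply (negative_persists (g a b) (dg a b)).
  - intros; apply g_deriv.
  - unfold g. rewrite sin_0. lra.
  - exact (dg_negative_persists Hk Ha).
Qed.

(** Near 0, [ddg t >= t (3k - 1 - k t²/2) > 0] by [cos t >= 1 - t²/2], [sin t < t]. *)
Lemma ddg_positive_near_0 : 1/3 < a - b < 1/2 ->
  forall t, 0 < t <= 3 * (a - b) - 1 -> 0 < ddg a b t.
Proof.
  intros Hk t Ht. unfold ddg. pose proof PI2_3_2.
  pose proof (cos_ge_quadratic t ltac:(lra)). pose proof (sin_lt_x t ltac:(lra)).
  set (k := a - b) in *.
  assert (Hcos : k * t * (1 - t^2/2) <= k * t * cos t) by (apply Rmult_le_compat_l; nra).
  assert (Hsin : (1 - 2 * k) * sin t < (1 - 2 * k) * t) by (apply Rmult_lt_compat_l; lra).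
  assert (Hsmall : k * t^2 / 2 < 3 * k - 1) by nra.
  assert (Hmain : 0 <= t * (3 * k - 1 - k * t^2 / 2)) by (apply Rmult_le_pos; lra).
  nra.
Qed.

Lemma g_positive_near_0 : 1/3 < a - b < 1/2 -> 2 * a <= 1 ->
  forall t, 0 < t <= 3 * (a - b) - 1 -> 0 < g a b t.
Proof.
  intros Hk Ha. apply (positive_after_zero (g a b) (dg a b)).
  - intros; apply g_deriv.
  - unfold g. rewrite sin_0. lra.
  - apply (positive_after_zero (dg a b) (ddg a b)).
    + intros; apply dg_deriv.
    + unfold dg. rewrite cos_0, sin_0. lra.
    + exact (ddg_positive_near_0 Hk).
Qed.

End SignOfG.

(** [Phi t] is the logarithm of [t (1 + cos t)^b / (1 - cos t)^a]; with [t = acos x]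
    both bounds of the theorem are bounds on [Phi].  [psi] is the logarithm of the
    constant of the upper bound, viewed as a function of [x1]. *)
Definition Phi (a b t : R) : R := ln t + b * ln (1 + cos t) - a * ln (1 - cos t).

Definition psi (a b x : R) : R :=
  (b + 1/2) * ln (1 + x) + (1/2 - a) * ln (1 - x) - ln (a + b + (a - b) * x).

Lemma Phi_deriv a b t : 0 < t < PI -> is_derive (Phi a b) t (g a b t / (t * sin t)).
Proof.
  intros Ht. pose proof (sin_gt_0 t ltac:(lra) ltac:(lra)) as Hsin.
  pose proof (sin2_cos2 t) as Hpyth. unfold Rsqr in Hpyth.
  assert (Hcos : -1 < cos t < 1) by (split; nra).
  unfold Phi, g. auto_derive; [lra|].
  field_simplify_eq; [| repeat split; lra].
  replace (sin t ^ 2) with (1 - cos t ^ 2) by nra. ring.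
Qed.

Lemma Phi_continuous a b t : 0 < t < PI -> continuity_pt (Phi a b) t.
Proof.
  intros Ht. apply derivable_continuous_pt.
  exists (g a b t / (t * sin t)). apply is_derive_Reals, Phi_deriv, Ht.
Qed.

(** [Phi t - psi (cos t) = ln (t (a+b+(a-b) cos t)) - ln (sin t)], using
    [(1 + cos t)(1 - cos t) = sin² t]; hence [Phi t <= psi (cos t)] exactly when [g t >= 0]. *)
Lemma Phi_le_psi_iff a b t : 0 < t < PI/2 -> 0 < a + b -> 0 < a - b ->
  (Phi a b t <= psi a b (cos t) <-> 0 <= g a b t).
Proof.
  intros Ht Hv Hk. pose proof PI_RGT_0.
  pose proof (cos_between_0_1 t Ht) as Hcos.
  pose proof (sin_gt_0 t ltac:(lra) ltac:(lra)) as Hsin.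
  assert (Hlin : 0 < a + b + (a - b) * cos t) by nra.
  assert (Hsq : ln (1 + cos t) + ln (1 - cos t) = 2 * ln (sin t)).
  { rewrite <- ln_mult by lra. replace 2 with (INR 2) by (simpl; ring).
    rewrite <- ln_pow by lra. f_equal.
    pose proof (sin2_cos2 t) as Hpyth. unfold Rsqr in Hpyth. simpl. nra. }
  assert (Hdiff : Phi a b t - psi a b (cos t)
                  = ln (t * (a + b + (a - b) * cos t)) - ln (sin t)).
  { unfold Phi, psi. rewrite ln_mult by lra. lra. }
  pose proof (ln_le_iff (t * (a + b + (a - b) * cos t)) (sin t)
                ltac:(apply Rmult_lt_0_compat; lra) Hsin) as Hln.
  unfold g. lra.
Qed.

(** Take a maximum [c]
    of [Phi] on [[t0, t]] with [t0] so small that [g t0 > 0]; if [Phi c > L >= psi (cos c)]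
    then [g c < 0], so [Phi] decreases at [c], contradicting maximality. *)
Lemma Phi_le_of_psi_le a b L : 1/3 < a - b < 1/2 -> 2 * a <= 1 -> 0 < a + b ->
  (forall x, 0 < x < 1 -> psi a b x <= L) ->
  forall t, 0 < t < PI/2 -> Phi a b t <= L.
Proof.
  intros Hk Ha Hv Hpsi t Ht. pose proof PI_RGT_0.
  destruct (Rle_or_lt (Phi a b t) L) as [|Hbig]; [assumption | exfalso].
  assert (Hbelow : forall u, 0 < u < PI/2 -> 0 <= g a b u -> Phi a b u <= L).
  { intros u Hu Hg. apply (Phi_le_psi_iff a b u Hu Hv ltac:(lra)) in Hg.
    pose proof (Hpsi (cos u) (cos_between_0_1 u Hu)). lra. }
  set (t0 := Rmin (3 * (a - b) - 1) (t / 2)).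
  assert (Ht0 : 0 < t0 /\ t0 <= 3 * (a - b) - 1 /\ t0 <= t / 2).
  { unfold t0. pose proof (Rmin_l (3 * (a - b) - 1) (t / 2)).
    pose proof (Rmin_r (3 * (a - b) - 1) (t / 2)).
    pose proof (Rmin_pos (3 * (a - b) - 1) (t / 2) ltac:(lra) ltac:(lra)). lra. }
  assert (HPhi0 : Phi a b t0 <= L)
    by (apply Hbelow; [lra | left; apply g_positive_near_0; lra]).
  destruct (continuity_ab_maj (Phi a b) t0 t ltac:(lra)) as [c [Hmax Hc]].
  { intros; apply Phi_continuous; lra. }
  pose proof (Hmax t ltac:(lra)) as Hct.
  assert (Hc0 : t0 < c) by (destruct (Req_dec c t0) as [->|]; lra).
  assert (Hgc : g a b c < 0).
  { destruct (Rlt_or_le (g a b c) 0) as [|Hg]; [assumption|].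
    pose proof (Hbelow c ltac:(lra) Hg). lra. }
  assert (Hslope : g a b c / (c * sin c) < 0).
  { apply Rdiv_neg_pos; [assumption|].
    apply Rmult_lt_0_compat; [lra | apply sin_gt_0; lra]. }
  destruct (larger_on_left (Phi a b) c _ t0 (Phi_deriv a b c ltac:(lra)) Hslope Hc0)
    as [y [Hy Hcy]].
  pose proof (Hmax y ltac:(lra)). lra.
Qed.

(** [psi' = psi_num / ((1 - x²)(a+b+(a-b)x))]; the quadratic [psi_num] has the roots
    [x1_of a b] and [x2_of a b]. *)
Definition psi_num (a b x : R) : R :=
  (a - b)^2 * x^2 + (a + b) * (2 * (a - b) - 1) * x + (a + b)^2 - (a - b).

Definition x2_of (a b : R) : R :=
  ((a + b) * (2*b - 2*a + 1) + sqrt (16*a*b*(b - a) + (a + b)^2)) / (2 * (a - b)^2).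

Lemma psi_deriv a b x : 0 < x < 1 -> 0 < a + b -> 0 < a - b ->
  is_derive (psi a b) x (psi_num a b x / ((1 - x^2) * (a + b + (a - b) * x))).
Proof.
  intros Hx Hv Hk. assert (Hlin : 0 < a + b + (a - b) * x) by nra.
  unfold psi, psi_num. auto_derive; [repeat split; lra|].
  field. repeat split; nra.
Qed.

Lemma psi_num_factor a b x : a <> b -> 0 <= 16*a*b*(b - a) + (a + b)^2 ->
  psi_num a b x = (a - b)^2 * (x - x1_of a b) * (x - x2_of a b).
Proof.
  intros Hk HD. unfold psi_num, x1_of, x2_of.
  set (D := 16*a*b*(b - a) + (a + b)^2) in *.
  field_simplify_eq; [| lra].
  rewrite pow2_sqrt by lra. unfold D; ring.
Qed.

(** The roots straddle 1: [x1 < 1 <= x2]; the second inequality reduces to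
    [D - W² = 8 k² a (1 - 2a) >= 0] for the discriminant [D]. *)
Lemma psi_roots_location a b : 1/3 < a - b < 1/2 -> 2 * a <= 1 -> 0 < a + b ->
  16*a*b*(b - a) + (a + b)^2 > 0 -> x1_of a b < 1 /\ 1 <= x2_of a b.
Proof.
  intros Hk Ha Hv HD. unfold x1_of, x2_of.
  set (D := 16*a*b*(b - a) + (a + b)^2) in *.
  assert (HS : sqrt D * sqrt D = D) by (apply sqrt_sqrt; lra).
  pose proof (sqrt_pos D) as HS0.
  assert (Hden : 0 < 2 * (a - b)^2) by nra.
  set (W := 2 * (a - b)^2 - (a + b) * (2*b - 2*a + 1)).
  assert (HW : W <= sqrt D).
  { assert (HDW : D - W * W = 8 * (a - b)^2 * a * (1 - 2 * a)) by (unfold D, W; ring).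
    assert (0 <= 8 * (a - b)^2 * a * (1 - 2 * a)) by (repeat apply Rmult_le_pos; nra).
    destruct (Rle_or_lt W (sqrt D)); [assumption | nra]. }
  split.
  - apply Rlt_div_l; [lra | nra].
  - apply Rle_div_r; [lra | unfold W in HW; lra].
Qed.

(** On (0, 1) the sign of [psi'] is that of [x1 - x], so [x1] maximizes [psi]. *)
Lemma psi_le_at_x1 a b : 1/3 < a - b < 1/2 -> 2 * a <= 1 -> 0 < a + b ->
  16*a*b*(b - a) + (a + b)^2 > 0 -> 0 < x1_of a b ->
  forall x, 0 < x < 1 -> psi a b x <= psi a b (x1_of a b).
Proof.
  intros Hk Ha Hv HD Hx1 x Hx.
  destruct (psi_roots_location a b Hk Ha Hv HD) as [Hx1lt Hx2].
  set (dpsi := fun c => psi_num a b c / ((1 - c^2) * (a + b + (a - b) * c))).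
  assert (Hsign : forall c, 0 < c < 1 -> 0 <= dpsi c * (x1_of a b - c)).
  { intros c Hc.
    assert (Hden : 0 < (1 - c^2) * (a + b + (a - b) * c))
      by (apply Rmult_lt_0_compat; nra).
    assert (Hnum : 0 <= psi_num a b c * (x1_of a b - c)).
    { rewrite psi_num_factor by lra.
      replace ((a - b)^2 * (c - x1_of a b) * (c - x2_of a b) * (x1_of a b - c))
        with (((a - b) * (c - x1_of a b))^2 * (x2_of a b - c)) by ring.
      apply Rmult_le_pos; [apply pow2_ge_0 | lra]. }
    unfold dpsi.
    replace (psi_num a b c / ((1 - c^2) * (a + b + (a - b) * c)) * (x1_of a b - c))
      with (psi_num a b c * (x1_of a b - c) / ((1 - c^2) * (a + b + (a - b) * c)))
      by (unfold Rdiv; ring).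
    apply Rdiv_le_0_compat; assumption. }
  destruct (Rle_or_lt x (x1_of a b)) as [Hle | Hlt].
  - apply (nondecreasing_of_deriv (psi a b) dpsi x (x1_of a b) Hle).
    + intros c Hc; apply psi_deriv; lra.
    + intros c Hc. specialize (Hsign c ltac:(lra)). nra.
  - apply (nonincreasing_of_deriv (psi a b) dpsi (x1_of a b) x (Rlt_le _ _ Hlt)).
    + intros c Hc; apply psi_deriv; lra.
    + intros c Hc. specialize (Hsign c ltac:(lra)). nra.
Qed.

(** For [a = 1/2]: [Phi(e) >= ½ ln 2 + b ln(1 + cos e)], from [2 (1 - cos e) <= e²];
    the right-hand side tends to [(b + ½) ln 2] as [e -> 0]. *)
Lemma Phi_half_near_0 b e : 0 < e <= PI/2 ->
  1/2 * ln 2 + b * ln (1 + cos e) <= Phi (1/2) b e.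
Proof.
  intros He. pose proof PI_RGT_0.
  pose proof (cos_ge_quadratic e ltac:(lra)) as Hquad.
  assert (Hc1 : cos e < 1).
  { destruct (Req_dec e (PI/2)) as [->|]; [rewrite cos_PI2; lra|].
    apply cos_between_0_1; lra. }
  assert (Hln : ln (2 * (1 - cos e)) <= ln (e * e)) by (apply ln_le; nra).
  rewrite !ln_mult in Hln by lra.
  unfold Phi. lra.
Qed.

(** If [g t < 0] then [g < 0] on [[t, π/2)], so [Phi t >=
    Phi (π/2) = ln (π/2)].  Otherwise [g >= 0] on (0, t], so [Phi t] dominates
    [Phi e] for small [e], hence the limit [(b + ½) ln 2]. *)
Lemma Phi_half_lower b : 0 < 1/2 - b -> forall t, 0 < t < PI/2 ->
  ln (PI/2) <= Phi (1/2) b t \/ (b + 1/2) * ln 2 <= Phi (1/2) b t.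
Proof.
  intros Hk t Ht. pose proof PI_RGT_0.
  assert (Hslope : forall c, 0 < c < PI -> 0 < c * sin c)
    by (intros c Hc; apply Rmult_lt_0_compat; [lra | apply sin_gt_0; lra]).
  destruct (Rlt_or_le (g (1/2) b t) 0) as [Hneg | Hnonneg].
  - left. replace (ln (PI/2)) with (Phi (1/2) b (PI/2))
      by (unfold Phi; rewrite cos_PI2, Rplus_0_r, Rminus_0_r, ln_1; ring).
    apply (nonincreasing_of_deriv (Phi (1/2) b) (fun u => g (1/2) b u / (u * sin u))).
    + lra.
    + intros c Hc; apply Phi_deriv; lra.
    + intros c Hc. apply Rlt_le, Rdiv_neg_pos; [|apply Hslope; lra].
      apply (g_negative_persists (1/2) b ltac:(lra) ltac:(lra) t c); lra.
  - right.
    set (h := fun e => 1/2 * ln 2 + b * ln (1 + cos e)).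
    replace ((b + 1/2) * ln 2) with (h 0) by (unfold h; rewrite cos_0; replace (1 + 1) with 2 by lra; ring).
    apply (le_of_right_bound h 0 t); [| lra |].
    + apply derivable_continuous_pt. exists 0.
      apply is_derive_Reals. unfold h. auto_derive; rewrite ?sin_0, ?cos_0; [lra | ring].
    + intros e He. eapply Rle_trans; [apply Phi_half_near_0; lra|].
      apply (nondecreasing_of_deriv (Phi (1/2) b) (fun u => g (1/2) b u / (u * sin u))).
      * lra.
      * intros c Hc; apply Phi_deriv; lra.
      * intros c Hc. apply Rdiv_le_0_compat; [|apply Hslope; lra].
        destruct (Rlt_or_le (g (1/2) b c) 0) as [Hc0|]; [exfalso|assumption].
        pose proof (g_negative_persists (1/2) b ltac:(lra) ltac:(lra) c t
                      ltac:(lra) ltac:(lra) Hc0). lra.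
Qed.

Lemma acos_in_first_quadrant x : 0 < x < 1 -> 0 < acos x < PI/2 /\ cos (acos x) = x.
Proof.
  intros Hx. assert (Hcos : cos (acos x) = x) by (apply cos_acos; lra).
  destruct (acos_bound_lt x ltac:(lra)) as [Hpos Hlt].
  split; [split; [assumption|] | assumption].
  destruct (Rlt_or_le (acos x) (PI/2)) as [|Hge]; [assumption|].
  pose proof (cos_le_0 (acos x) Hge ltac:(lra)). lra.
Qed.

Lemma ln_profile a b m x : 0 < m ->
  ln (m * (Rpower (1 - x) a / Rpower (1 + x) b)) = ln m + a * ln (1 - x) - b * ln (1 + x).
Proof.
  intros Hm. pose proof (exp_pos (a * ln (1 - x))). pose proof (exp_pos (b * ln (1 + x))).
  unfold Rdiv. rewrite !ln_mult, ln_Rinv, !ln_Rpower; unfold Rpower;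
    try apply Rmult_lt_0_compat; try apply Rinv_0_lt_compat; try assumption; ring.
Qed.

Lemma profile_pos a b m x : 0 < m -> 0 < m * (Rpower (1 - x) a / Rpower (1 + x) b).
Proof.
  intros Hm. apply Rmult_lt_0_compat; [assumption|].
  apply Rdiv_lt_0_compat; apply exp_pos.
Qed.

(** The upper bound of the theorem: [ln] of it is [Phi θ <= psi x1]. *)
Lemma arccos_upper_bound a b x : 1/3 < a - b < 1/2 -> 2 * a <= 1 -> 0 < a + b ->
  16*a*b*(b - a) + (a + b)^2 > 0 -> 0 < x1_of a b -> 0 < x < 1 ->
  acos x <= Rpower (1 + x1_of a b) (b + 1/2) * Rpower (1 - x1_of a b) (1/2 - a)
            / (a + b + (a - b) * x1_of a b) * (Rpower (1 - x) a / Rpower (1 + x) b).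
Proof.
  intros Hk Ha Hv HD Hx1 Hx.
  destruct (acos_in_first_quadrant x Hx) as [Hth Hcos].
  destruct (psi_roots_location a b Hk Ha Hv HD) as [Hx1lt _].
  set (x1 := x1_of a b) in *.
  assert (Hlin : 0 < a + b + (a - b) * x1) by nra.
  set (M := Rpower (1 + x1) (b + 1/2) * Rpower (1 - x1) (1/2 - a) / (a + b + (a - b) * x1)).
  assert (HM : 0 < M) by (apply Rdiv_lt_0_compat; [apply Rmult_lt_0_compat; apply exp_pos | lra]).
  assert (HlnM : ln M = psi a b x1).
  { unfold M, psi, Rdiv. rewrite !ln_mult, ln_Rinv, !ln_Rpower by
      (try apply Rmult_lt_0_compat; try apply Rinv_0_lt_compat; try apply exp_pos; lra).
    ring. }
  pose proof (Phi_le_of_psi_le a b (psi a b x1) Hk Ha Hv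
                (psi_le_at_x1 a b Hk Ha Hv HD Hx1) (acos x) Hth) as Hphi.
  apply (ln_le_iff (acos x) _ ltac:(lra) (profile_pos a b M x HM)).
  rewrite ln_profile by assumption. unfold Phi in Hphi. rewrite Hcos in Hphi. lra.
Qed.

(** The lower bound for [a = 1/2]: [ln m <= min (ln (π/2), (b + ½) ln 2) <= Phi θ]. *)
Lemma arccos_lower_bound_half b x : 0 < 1/2 - b -> 0 < x < 1 ->
  Rmin (Rpower 2 (b + 1/2)) (PI/2) * (Rpower (1 - x) (1/2) / Rpower (1 + x) b) <= acos x.
Proof.
  intros Hb Hx. pose proof PI_RGT_0.
  destruct (acos_in_first_quadrant x Hx) as [Hth Hcos].
  set (m := Rmin (Rpower 2 (b + 1/2)) (PI/2)).
  assert (Hm : 0 < m) by (apply Rmin_pos; [apply exp_pos | lra]).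
  assert (Hm1 : ln m <= ln (PI/2)) by (apply ln_le; [assumption | apply Rmin_r]).
  assert (Hm2 : ln m <= (b + 1/2) * ln 2)
    by (rewrite <- ln_Rpower; apply ln_le; [assumption | apply Rmin_l]).
  apply (ln_le_iff _ (acos x) (profile_pos (1/2) b m x Hm) ltac:(lra)).
  rewrite ln_profile by assumption.
  pose proof (Phi_half_lower b Hb (acos x) Hth) as Hphi.
  unfold Phi in Hphi. rewrite Hcos in Hphi. lra.
Qed.

(** Theorem 2.  The hypotheses give [b > 0] (as [2/π >= 1/2 >= a]) and [a - b < 1/2]
    (as [π² > 8]); the rest is the two bounds above. *)
Theorem theorem2 (a b : R)
  (h1 : 1/3 < a - b) (h2 : a - b < 4 / PI^2)
  (h3 : 2/PI - b < a) (h4 : a <= 1/2)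
  (h5 : 16*a*b*(b - a) + (a + b)^2 > 0)
  (h6 : x1_of a b > 0) :
  forall x : R, 0 < x < 1 ->
    Lbound a b x <= acos x /\
    acos x <= Rpower (1 + x1_of a b) (b + 1/2) * Rpower (1 - x1_of a b) (1/2 - a)
              / (a + b + (a - b) * x1_of a b)
              * (Rpower (1 - x) a / Rpower (1 + x) b).
Proof.
  intros x Hx. pose proof PI_RGT_0. pose proof PI_4. pose proof PI2_3_2.
  assert (Hk : a - b < 1/2).
  { assert (4 / PI^2 <= 1/2) by (apply Rle_div_l; nra). lra. }
  assert (Hb : 0 < b).
  { assert (Hinv : 2 / PI * PI = 2) by (field; lra). nra. }
  split.
  - unfold Lbound. destruct (Req_EM_T a (1/2)) as [-> | _].
    + apply arccos_lower_bound_half; lra.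
    + destruct (acos_in_first_quadrant x Hx); lra.
  - apply arccos_upper_bound; lra.
Qed.
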